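(* The variety $\mathsf{V}(S_{(4,453)})$ is the ai-semiring variety defined by the identities $x^2y\approx xy$, $xy^2\approx xy$, $xyz\approx xzy$, $x^2\approx x^2+x$, $xy\approx xy+xyz$, $x+yz\approx x+yz+yx$.
   Context: An ai-semiring is an algebra $(S,+,\cdot)$ with $(S,+)$ a semilattice, $(S,\cdot)$ a semigroup, and both distributive laws. $\mathsf{V}(S)$ is the variety generated by $S$; ''the ai-semiring variety defined by identities $\Sigma$'' is the class of all ai-semirings satisfying $\Sigma$. $S_{(4,453)}$ has carrier $\{1,2,3,4\}$; addition: $x+x=x$, $2+x=x$, $1+x=1$ for all $x$, $3+4=1$; multiplication (row $a$, column $b$ gives $a\cdot b$): row $1$: $1,4,1,4$; row $2$: $2,2,2,2$; row $3$: $1,4,1,4$; row $4$: $4,4,4,4$. *)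

Record aisemiring := AISemiring {
  carrier :> Type;
  sadd : carrier -> carrier -> carrier;
  smul : carrier -> carrier -> carrier;
  sadd_assoc : forall x y z, sadd x (sadd y z) = sadd (sadd x y) z;
  sadd_comm : forall x y, sadd x y = sadd y x;
  sadd_idem : forall x, sadd x x = x;
  smul_assoc : forall x y z, smul x (smul y z) = smul (smul x y) z;
  smul_addl : forall x y z, smul (sadd x y) z = sadd (smul x z) (smul y z);
  smul_addr : forall x y z, smul x (sadd y z) = sadd (smul x y) (smul x z)
}.

Inductive E4 : Type := e1 | e2 | e3 | e4.

Definition add453 (a b : E4) : E4 :=
  match a, b with
  | e1, _ => e1 | _, e1 => e1
  | e2, x => x | x, e2 => x
  | e3, e3 => e3 | e4, e4 => e4
  | e3, e4 => e1 | e4, e3 => e1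
  end.

Definition mul453 (a b : E4) : E4 :=
  match a, b with
  | e1, e1 => e1 | e1, e2 => e4 | e1, e3 => e1 | e1, e4 => e4
  | e2, _ => e2
  | e3, e1 => e1 | e3, e2 => e4 | e3, e3 => e1 | e3, e4 => e4
  | e4, _ => e4
  end.

Definition S453 : aisemiring.
Proof.
  refine (@AISemiring E4 add453 mul453 _ _ _ _ _ _);
  intros; repeat match goal with x : E4 |- _ => destruct x; clear x end; reflexivity.
Defined.

(** Variety generated by an ai-semiring S: V(S) = HSP(S), i.e. the class of
    homomorphic images of subalgebras of direct powers of S. *)

Definition padd (S : aisemiring) (I : Type) (f g : I -> S) : I -> S :=
  fun i => sadd S (f i) (g i).
Definition pmul (S : aisemiring) (I : Type) (f g : I -> S) : I -> S :=
  fun i => smul S (f i) (g i).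

Definition in_variety_generated_by (S : aisemiring) (A : aisemiring) : Prop :=
  exists (I : Type) (B : (I -> S) -> Prop)
         (closed_add : forall f g, B f -> B g -> B (padd S I f g))
         (closed_mul : forall f g, B f -> B g -> B (pmul S I f g))
         (h : {f : I -> S | B f} -> A),
    (forall y : A, exists x, h x = y) /\
    (forall f g (Bf : B f) (Bg : B g),
        h (exist _ (padd S I f g) (closed_add f g Bf Bg))
        = sadd A (h (exist _ f Bf)) (h (exist _ g Bg))) /\
    (forall f g (Bf : B f) (Bg : B g),
        h (exist _ (pmul S I f g) (closed_mul f g Bf Bg))
        = smul A (h (exist _ f Bf)) (h (exist _ g Bg))).

Definition satisfies_Sigma (A : aisemiring) : Prop :=
  let a := sadd A in let m := smul A in
  (forall x y, m (m x x) y = m x y) /\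
  (forall x y, m x (m y y) = m x y) /\
  (forall x y z, m (m x y) z = m (m x z) y) /\
  (forall x, m x x = a (m x x) x) /\
  (forall x y z, m x y = a (m x y) (m (m x y) z)) /\
  (forall x y z, a x (m y z) = a (a x (m y z)) (m y x)).

From Stdlib Require Import List Permutation Classical ClassicalEpsilon
  FunctionalExtensionality ProofIrrelevance.
Import ListNotations.

(* Both classes are varieties, so it suffices to compare identities.  [S453]
   satisfies Sigma, which gives one inclusion.  Conversely, modulo Sigma a
   product [x t1 ... tn] with [n >= 1] depends only on its head [x] and its set
   of letters, and every term is a sum of such words.  An inequality [w <= q]
   between a word and a term holds in [S453] only if [w] is covered by the words
   of [q] (otherwise an assignment sending some letters to 3 and the others to
   2 separates them), and every covered inequality follows from Sigma. *)

Section Order.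
Variable A : aisemiring.
Local Notation "x + y" := (sadd A x y).
Local Notation "x * y" := (smul A x y).

Definition le (a b : A) : Prop := a + b = b.

Lemma le_refl a : le a a.
Proof. apply sadd_idem. Qed.

Lemma le_trans a b c : le a b -> le b c -> le a c.
Proof. unfold le; intros Hab Hbc. rewrite <- Hbc, sadd_assoc, Hab; reflexivity. Qed.

Lemma le_antisym a b : le a b -> le b a -> a = b.
Proof. unfold le; intros Hab Hba. rewrite <- Hab, <- Hba at 1. apply sadd_comm. Qed.

Lemma le_add_r a b : le a (a + b).
Proof. unfold le; rewrite sadd_assoc, sadd_idem; reflexivity. Qed.

Lemma le_add_l a b : le a (b + a).
Proof. rewrite sadd_comm; apply le_add_r. Qed.

Lemma add_lub a b c : le a c -> le b c -> le (a + b) c.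
Proof. unfold le; intros Hac Hbc. rewrite <- sadd_assoc, Hbc; exact Hac. Qed.

Lemma mul_le_mono_r a b c : le a b -> le (a * c) (b * c).
Proof. unfold le; intros Hab. rewrite <- smul_addl, Hab; reflexivity. Qed.

Lemma mul_le_mono_l a b c : le a b -> le (c * a) (c * b).
Proof. unfold le; intros Hab. rewrite <- smul_addr, Hab; reflexivity. Qed.

Lemma mul_le_mono a b c d : le a b -> le c d -> le (a * c) (b * d).
Proof.
  intros Hab Hcd. apply le_trans with (b * c);
    [apply mul_le_mono_r | apply mul_le_mono_l]; assumption.
Qed.

End Order.

Arguments le {A} a b.

Inductive term (V : Type) : Type :=
  | Var (v : V)
  | TAdd (p q : term V)
  | TMul (p q : term V).
Arguments Var {V}. Arguments TAdd {V}. Arguments TMul {V}.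

Fixpoint eval (A : aisemiring) {V : Type} (r : V -> A) (t : term V) : A :=
  match t with
  | Var v => r v
  | TAdd p q => sadd A (eval A r p) (eval A r q)
  | TMul p q => smul A (eval A r p) (eval A r q)
  end.

Definition holds (A : aisemiring) {V : Type} (p q : term V) : Prop :=
  forall r : V -> A, eval A r p = eval A r q.

(* A word [(x, [t1; ...; tn])] stands for the product [x t1 ... tn]. *)
Definition word (V : Type) : Type := (V * list V)%type.

Definition content {V : Type} (w : word V) : list V := fst w :: snd w.

Definition wcat {V : Type} (u w : word V) : word V := (fst u, snd u ++ content w).

Fixpoint words {V : Type} (t : term V) : list (word V) :=
  match t with
  | Var v => [(v, [])]
  | TAdd p q => words p ++ words q
  | TMul p q => flat_map (fun u => map (wcat u) (words q)) (words p)
  end.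

Lemma in_words_mul {V : Type} (p q : term V) w :
  In w (words (TMul p q)) <-> exists u v, In u (words p) /\ In v (words q) /\ w = wcat u v.
Proof.
  simpl; rewrite in_flat_map. split.
  - intros [u [Hu Hw]]. apply in_map_iff in Hw as [v [<- Hv]]. eauto.
  - intros [u [v [Hu [Hv ->]]]]. exists u; split; [exact Hu | apply in_map, Hv].
Qed.

(* For [Q] the words of [q], this is the criterion for [w <= q] to hold in
   [S453], and then in every model of Sigma. *)
Definition covered {V : Type} (w : word V) (Q : list (word V)) : Prop :=
  (exists u, In u Q /\ incl (content u) (content w)) /\
  (snd w <> [] -> exists T, T <> [] /\ In (fst w, T) Q).

Section Words.
Variable A : aisemiring.
Local Notation "x + y" := (sadd A x y).
Local Notation "x * y" := (smul A x y).

Definition lprod (m : A) (l : list A) : A := fold_left (smul A) l m.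

Lemma lprod_mul_head m n l : lprod (m * n) l = m * lprod n l.
Proof.
  unfold lprod; revert n; induction l as [|a l IH]; intros n; simpl; [reflexivity|].
  rewrite <- smul_assoc; apply IH.
Qed.

Definition eval_word {V : Type} (r : V -> A) (w : word V) : A :=
  lprod (r (fst w)) (map r (snd w)).

Lemma eval_word_wcat {V : Type} (r : V -> A) u w :
  eval_word r (wcat u w) = eval_word r u * eval_word r w.
Proof.
  destruct u as [x T], w as [y U]; unfold eval_word, wcat, content; simpl.
  rewrite map_app; unfold lprod at 1; rewrite fold_left_app; apply lprod_mul_head.
Qed.

Lemma eval_word_le_eval {V : Type} (r : V -> A) t w :
  In w (words t) -> le (eval_word r w) (eval A r t).
Proof.
  revert w; induction t as [v|p IHp q IHq|p IHp q IHq]; intros w Hw; simpl.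
  - destruct Hw as [<-|[]]; apply le_refl.
  - apply in_app_or in Hw as [Hw|Hw]; eapply le_trans;
      [apply IHp, Hw | apply le_add_r | apply IHq, Hw | apply le_add_l].
  - apply in_words_mul in Hw as [u [v [Hu [Hv ->]]]].
    rewrite eval_word_wcat; apply mul_le_mono; auto.
Qed.

Definition additive (phi : A -> A) : Prop := forall x y, phi (x + y) = phi x + phi y.

(* The statement is generalised over an additive [phi] so that, for a product,
   the other factor can be absorbed into [phi]. *)
Lemma additive_eval_le_of_words {V : Type} (r : V -> A) t :
  forall phi X, additive phi ->
  (forall w, In w (words t) -> le (phi (eval_word r w)) X) -> le (phi (eval A r t)) X.
Proof.
  induction t as [v|p IHp q IHq|p IHp q IHq]; intros phi X Hphi Hw; simpl.
  - apply (Hw (v, [])); left; reflexivity.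
  - rewrite Hphi; apply add_lub;
      [apply IHp | apply IHq]; auto; intros w Hin; apply Hw, in_or_app; auto.
  - apply (IHp (fun y => phi (y * eval A r q))).
    { intros x y; rewrite smul_addl; apply Hphi. }
    intros u Hu. apply (IHq (fun y => phi (eval_word r u * y))).
    { intros x y; rewrite smul_addr; apply Hphi. }
    intros v Hv. rewrite <- eval_word_wcat. apply Hw, in_words_mul; eauto.
Qed.

Lemma eval_le_of_words {V : Type} (r : V -> A) t X :
  (forall w, In w (words t) -> le (eval_word r w) X) -> le (eval A r t) X.
Proof. apply (additive_eval_le_of_words r t (fun y => y)); intros x y; reflexivity. Qed.

End Words.

Section SigmaModels.
Variable A : aisemiring.
Hypothesis HA : satisfies_Sigma A.
Local Notation "x + y" := (sadd A x y).
Local Notation "x * y" := (smul A x y).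

Lemma mul_sq_l x y : (x * x) * y = x * y.
Proof. apply HA. Qed.

Lemma mul_sq_r x y : x * (y * y) = x * y.
Proof. apply HA. Qed.

Lemma mul_right_comm x y z : (x * y) * z = (x * z) * y.
Proof. apply HA. Qed.

Lemma le_sq x : le x (x * x).
Proof. unfold le; rewrite sadd_comm; symmetry; apply HA. Qed.

Lemma mul_ext_le x y z : le ((x * y) * z) (x * y).
Proof. unfold le; rewrite sadd_comm; symmetry; apply HA. Qed.

Lemma mul_le_add_mul x y z : le (y * x) (x + y * z).
Proof. unfold le; rewrite sadd_comm; symmetry; apply HA. Qed.

Lemma lprod_perm l l' : Permutation l l' -> forall m, lprod A m l = lprod A m l'.
Proof.
  unfold lprod; induction 1; intros m; simpl; auto.
  - rewrite mul_right_comm; reflexivity.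
  - rewrite IHPermutation1; apply IHPermutation2.
Qed.

Lemma lprod_cons_dup m a l : In a l -> lprod A m (a :: l) = lprod A m l.
Proof.
  intros Hin. apply in_split in Hin as [l1 [l2 ->]].
  assert (Hmid : Permutation (l1 ++ a :: l2) (a :: l1 ++ l2))
    by apply Permutation_sym, Permutation_middle.
  rewrite (lprod_perm _ _ (perm_skip a Hmid)), (lprod_perm _ _ Hmid).
  unfold lprod; simpl. rewrite <- smul_assoc, mul_sq_r; reflexivity.
Qed.

Lemma lprod_app_incl m l' l : incl l' l -> lprod A m (l' ++ l) = lprod A m l.
Proof.
  induction l' as [|a l' IH]; intros Hincl; [reflexivity|].
  rewrite <- app_comm_cons, lprod_cons_dup.
  - apply IH, (incl_cons_inv Hincl).
  - apply in_or_app; right; apply Hincl; left; reflexivity.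
Qed.

Lemma lprod_incl_eq m l1 l2 : incl l1 l2 -> incl l2 l1 -> lprod A m l1 = lprod A m l2.
Proof.
  intros H12 H21.
  rewrite <- (lprod_app_incl m l2 l1 H21), (lprod_perm _ _ (Permutation_app_comm l2 l1)).
  apply lprod_app_incl, H12.
Qed.

Lemma lprod_head_dup a l : l <> [] -> lprod A a l = lprod A a (a :: l).
Proof.
  destruct l as [|b l]; [congruence|]; intros _.
  unfold lprod; simpl; rewrite mul_sq_l; reflexivity.
Qed.

Lemma eval_word_content {V : Type} (r : V -> A) x T1 T2 :
  T1 <> [] -> T2 <> [] -> incl (x :: T1) (x :: T2) -> incl (x :: T2) (x :: T1) ->
  eval_word A r (x, T1) = eval_word A r (x, T2).
Proof.
  intros N1 N2 H12 H21; unfold eval_word; simpl.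
  rewrite (lprod_head_dup _ (map r T1)), (lprod_head_dup _ (map r T2))
    by (intros Hnil; apply map_eq_nil in Hnil; contradiction).
  apply lprod_incl_eq; [apply (incl_map r H12) | apply (incl_map r H21)].
Qed.

Lemma word_le_of_covered {V : Type} (r : V -> A) w Q X :
  covered w Q -> (forall u, In u Q -> le (eval_word A r u) X) -> le (eval_word A r w) X.
Proof.
  destruct w as [x T]; intros [[[hu Tu] [Hu Hsub]] Hlong] HQ.
  unfold content in Hsub; simpl in Hsub, Hlong.
  destruct T as [|t T].
  - assert (Hhu : hu = x) by (destruct (Hsub hu (in_eq _ _)) as [->|[]]; reflexivity).
    subst hu. destruct Tu as [|t' Tu]; [exact (HQ _ Hu)|].
    eapply le_trans; [| apply (HQ _ Hu)].
    rewrite (eval_word_content r x (t' :: Tu) [x]); try discriminate.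
    + exact (le_sq (r x)).
    + intros v Hv; right; apply Hsub, Hv.
    + intros v [<-|[<-|[]]]; left; reflexivity.
  - destruct (Hlong ltac:(discriminate)) as [[|t0 T0] [N0 H0]]; [congruence|].
    assert (Hxu : le (r x * eval_word A r (hu, Tu)) X).
    { eapply le_trans; [apply (mul_le_add_mul _ _ (eval_word A r (t0, T0)))|].
      apply add_lub; [exact (HQ _ Hu)|].
      change (r x) with (eval_word A r (x, [])); rewrite <- eval_word_wcat.
      exact (HQ _ H0). }
    eapply le_trans; [| exact Hxu].
    assert (Hw : eval_word A r (x, t :: T) = eval_word A r (wcat (wcat (x, []) (hu, Tu)) (t, T))).
    { apply eval_word_content; try discriminate; simpl.
      - intros v [<-|Hv]; [left; reflexivity|].
        right; apply (in_or_app (hu :: Tu)); right; exact Hv.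
      - intros v [<-|Hv]; [left; reflexivity|].
        apply (in_app_or (hu :: Tu)) in Hv as [Hv|Hv]; [apply Hsub, Hv | right; exact Hv]. }
    rewrite Hw, !eval_word_wcat. apply mul_ext_le.
Qed.

End SigmaModels.

Definition indicator {V : Type} (Y : V -> Prop) (v : V) : S453 :=
  if excluded_middle_informative (Y v) then e3 else e2.

Lemma indicator_in {V : Type} (Y : V -> Prop) v : Y v -> indicator Y v = e3.
Proof. unfold indicator; destruct excluded_middle_informative; tauto. Qed.

Lemma indicator_out {V : Type} (Y : V -> Prop) v : ~ Y v -> indicator Y v = e2.
Proof. unfold indicator; destruct excluded_middle_informative; tauto. Qed.

Lemma lprod453_e2 l : lprod S453 e2 l = e2.
Proof. unfold lprod; induction l; simpl; auto. Qed.

Lemma lprod453_e4 l : lprod S453 e4 l = e4.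
Proof. unfold lprod; induction l; simpl; auto. Qed.

Lemma lprod453_e1_or_e4 m l : m = e1 \/ m = e4 -> lprod S453 m l = e1 \/ lprod S453 m l = e4.
Proof.
  unfold lprod; revert m; induction l as [|a l IH]; intros m Hm; [exact Hm|].
  apply IH; destruct Hm as [-> | ->]; destruct a; simpl; auto.
Qed.

Lemma lprod453_e1 l : (forall a, In a l -> a = e3) -> lprod S453 e1 l = e1.
Proof.
  unfold lprod; induction l as [|a l IH]; intros Hl; [reflexivity|].
  simpl; rewrite (Hl a (in_eq _ _)); apply IH; intros b Hb; apply Hl; right; exact Hb.
Qed.

Lemma lprod453_e2_in m l : m = e1 \/ m = e3 -> In e2 l -> lprod S453 m l = e4.
Proof.
  unfold lprod; revert m; induction l as [|a l IH]; intros m Hm Hl; [destruct Hl|].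
  destruct Hl as [->|Hl].
  - destruct Hm as [-> | ->]; apply lprod453_e4.
  - simpl; destruct Hm as [-> | ->]; destruct a;
      solve [apply IH; auto | apply lprod453_e4 | apply lprod453_e2].
Qed.

Section IndicatorWords.
Variables (V : Type) (Y : V -> Prop).

Lemma eval_word_indicator_le_e4 w :
  (exists v, In v (content w) /\ ~ Y v) -> le (eval_word S453 (indicator Y) w) e4.
Proof.
  destruct w as [x T]; intros [v [Hv Hnv]]; unfold eval_word; simpl.
  destruct (classic (Y x)) as [Hx|Hx].
  - rewrite indicator_in by exact Hx.
    destruct Hv as [<-|Hv]; [contradiction|].
    rewrite lprod453_e2_in; [reflexivity | right; reflexivity |].
    rewrite <- (indicator_out Y v Hnv); apply in_map, Hv.
  - rewrite indicator_out, lprod453_e2 by exact Hx; reflexivity.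
Qed.

Lemma eval_word_indicator_not_le_e4 w :
  (forall v, In v (content w) -> Y v) -> ~ le (eval_word S453 (indicator Y) w) e4.
Proof.
  destruct w as [x T]; intros Hw; unfold eval_word; simpl.
  rewrite indicator_in by (apply Hw; left; reflexivity).
  destruct T as [|t T]; [discriminate|]. simpl.
  rewrite indicator_in by (apply Hw; right; left; reflexivity).
  rewrite lprod453_e1; [discriminate|].
  intros a Ha; apply in_map_iff in Ha as [v [<- Hv]].
  apply indicator_in, Hw; right; right; exact Hv.
Qed.

Lemma eval_word_indicator_le_e3 w :
  (Y (fst w) -> snd w = []) -> le (eval_word S453 (indicator Y) w) e3.
Proof.
  destruct w as [x T]; intros Hw; unfold eval_word; simpl in *.
  destruct (classic (Y x)) as [Hx|Hx].
  - rewrite (Hw Hx), indicator_in by exact Hx; reflexivity.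
  - rewrite indicator_out, lprod453_e2 by exact Hx; reflexivity.
Qed.

Lemma eval_word_indicator_not_le_e3 w :
  Y (fst w) -> snd w <> [] -> ~ le (eval_word S453 (indicator Y) w) e3.
Proof.
  destruct w as [x [|t T]]; intros Hx HT; [contradiction HT; reflexivity|].
  unfold eval_word; simpl in *.
  rewrite indicator_in by exact Hx.
  assert (Ht : mul453 e3 (indicator Y t) = e1 \/ mul453 e3 (indicator Y t) = e4)
    by (unfold indicator; destruct excluded_middle_informative; auto).
  change (~ le (lprod S453 (mul453 e3 (indicator Y t)) (map (indicator Y) T)) e3).
  destruct (lprod453_e1_or_e4 _ (map (indicator Y) T) Ht) as [-> | ->]; discriminate.
Qed.

End IndicatorWords.

(* The separating assignments are the indicators of the letters of [w] and of
   the head of [w]. *)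
Lemma covered_of_S453_le {V : Type} (w : word V) (q : term V) :
  (forall sg : V -> S453, le (eval_word S453 sg w) (eval S453 sg q)) -> covered w (words q).
Proof.
  intros Hle; split.
  - apply NNPP; intros Hnone.
    apply (eval_word_indicator_not_le_e4 V (fun v => In v (content w)) w); [auto|].
    eapply le_trans; [apply Hle|]. apply eval_le_of_words; intros u Hu.
    apply eval_word_indicator_le_e4, NNPP; intros Hall.
    apply Hnone; exists u; split; [exact Hu|].
    intros v Hv; apply NNPP; intros Hnv; apply Hall; eauto.
  - intros HT; apply NNPP; intros Hnone.
    apply (eval_word_indicator_not_le_e3 V (eq (fst w)) w); auto.
    eapply le_trans; [apply Hle|]. apply eval_le_of_words; intros [x T] Hu.
    apply eval_word_indicator_le_e3; simpl; intros <-.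
    destruct T as [|t T]; [reflexivity|].
    exfalso; apply Hnone; exists (t :: T); split; [discriminate | exact Hu].
Qed.

Lemma le_transfer_S453 (A : aisemiring) (HA : satisfies_Sigma A) {V : Type} (p q : term V) :
  (forall sg : V -> S453, le (eval S453 sg p) (eval S453 sg q)) ->
  forall r : V -> A, le (eval A r p) (eval A r q).
Proof.
  intros Hpq r. apply eval_le_of_words; intros w Hw.
  apply (word_le_of_covered A HA r w (words q)).
  - apply covered_of_S453_le; intros sg.
    eapply le_trans; [apply eval_word_le_eval, Hw | apply Hpq].
  - intros u Hu; apply eval_word_le_eval, Hu.
Qed.

Lemma identities_of_S453 (A : aisemiring) (HA : satisfies_Sigma A) {V : Type} (p q : term V) :
  holds S453 p q -> holds A p q.
Proof.
  intros Hpq r; apply le_antisym; apply (le_transfer_S453 A HA);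
    intros sg; rewrite Hpq; apply le_refl.
Qed.

Section VarietyToIdentities.
Variables (S A : aisemiring) (I : Type) (B : (I -> S) -> Prop).
Hypothesis closed_add : forall f g, B f -> B g -> B (padd S I f g).
Hypothesis closed_mul : forall f g, B f -> B g -> B (pmul S I f g).
Variable h : {f : I -> S | B f} -> A.
Hypothesis h_add : forall f g (Bf : B f) (Bg : B g),
  h (exist _ (padd S I f g) (closed_add f g Bf Bg)) = sadd A (h (exist _ f Bf)) (h (exist _ g Bg)).
Hypothesis h_mul : forall f g (Bf : B f) (Bg : B g),
  h (exist _ (pmul S I f g) (closed_mul f g Bf Bg)) = smul A (h (exist _ f Bf)) (h (exist _ g Bg)).

Fixpoint eval_sub {V : Type} (rho : V -> {f : I -> S | B f}) (t : term V) : {f : I -> S | B f} :=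
  match t with
  | Var v => rho v
  | TAdd p q =>
      let (f, Bf) := eval_sub rho p in let (g, Bg) := eval_sub rho q in
      exist _ (padd S I f g) (closed_add f g Bf Bg)
  | TMul p q =>
      let (f, Bf) := eval_sub rho p in let (g, Bg) := eval_sub rho q in
      exist _ (pmul S I f g) (closed_mul f g Bf Bg)
  end.

Lemma h_eval_sub {V : Type} (rho : V -> {f : I -> S | B f}) t :
  h (eval_sub rho t) = eval A (fun v => h (rho v)) t.
Proof.
  induction t as [v|p IHp q IHq|p IHp q IHq]; simpl; [reflexivity| |];
    rewrite <- IHp, <- IHq; destruct (eval_sub rho p), (eval_sub rho q);
    [apply h_add | apply h_mul].
Qed.

Lemma eval_sub_coord {V : Type} (rho : V -> {f : I -> S | B f}) t i :
  proj1_sig (eval_sub rho t) i = eval S (fun v => proj1_sig (rho v) i) t.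
Proof.
  induction t as [v|p IHp q IHq|p IHp q IHq]; simpl; [reflexivity| |];
    rewrite <- IHp, <- IHq; destruct (eval_sub rho p), (eval_sub rho q); reflexivity.
Qed.

Lemma eval_sub_holds {V : Type} (rho : V -> {f : I -> S | B f}) (p q : term V) :
  holds S p q -> eval_sub rho p = eval_sub rho q.
Proof.
  intros Hpq.
  assert (Hcoord : proj1_sig (eval_sub rho p) = proj1_sig (eval_sub rho q)).
  { apply functional_extensionality; intros i; rewrite !eval_sub_coord; apply Hpq. }
  destruct (eval_sub rho p), (eval_sub rho q); simpl in Hcoord.
  apply subset_eq_compat, Hcoord.
Qed.

End VarietyToIdentities.

Lemma identities_of_variety (S A : aisemiring) :
  in_variety_generated_by S A -> forall (V : Type) (p q : term V), holds S p q -> holds A p q.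
Proof.
  intros [I [B [cadd [cmul [h [Hsurj [Hadd Hmul]]]]]]] V p q Hpq r.
  pose (lift v := constructive_indefinite_description _ (Hsurj (r v))).
  replace r with (fun v => h (proj1_sig (lift v)))
    by (apply functional_extensionality; intros v; exact (proj2_sig (lift v))).
  rewrite <- !(h_eval_sub S A I B cadd cmul h Hadd Hmul).
  f_equal; apply eval_sub_holds, Hpq.
Qed.

Section IdentitiesToVariety.
Variables S A : aisemiring.

Definition term_function (f : (A -> S) -> S) : Prop :=
  exists t : term A, forall sg, f sg = eval S sg t.

Lemma term_function_var a : term_function (fun sg => sg a).
Proof. exists (Var a); reflexivity. Qed.

Lemma term_function_add f g :
  term_function f -> term_function g -> term_function (padd S (A -> S) f g).
Proof.
  intros [p Hp] [q Hq]; exists (TAdd p q); intros sg.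
  unfold padd; simpl; rewrite Hp, Hq; reflexivity.
Qed.

Lemma term_function_mul f g :
  term_function f -> term_function g -> term_function (pmul S (A -> S) f g).
Proof.
  intros [p Hp] [q Hq]; exists (TMul p q); intros sg.
  unfold pmul; simpl; rewrite Hp, Hq; reflexivity.
Qed.

Definition realize (f : {f : (A -> S) -> S | term_function f}) : A :=
  eval A (fun a => a) (proj1_sig (constructive_indefinite_description _ (proj2_sig f))).

Hypothesis HA : forall p q : term A, holds S p q -> holds A p q.

Lemma realize_spec f (Hf : term_function f) t :
  (forall sg, f sg = eval S sg t) -> realize (exist _ f Hf) = eval A (fun a => a) t.
Proof.
  intros Ht; unfold realize; simpl.
  destruct (constructive_indefinite_description _ Hf) as [t' Ht']; simpl.
  apply HA; intros sg; rewrite <- Ht, <- Ht'; reflexivity.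
Qed.

Lemma variety_of_identities : in_variety_generated_by S A.
Proof.
  exists (A -> S), term_function, term_function_add, term_function_mul, realize.
  split; [|split].
  - intros y. exists (exist _ _ (term_function_var y)).
    apply (realize_spec _ _ (Var y)); reflexivity.
  - intros f g [p Hp] [q Hq].
    rewrite (realize_spec _ _ p Hp), (realize_spec _ _ q Hq).
    apply (realize_spec _ _ (TAdd p q)); intros sg.
    unfold padd; simpl; rewrite Hp, Hq; reflexivity.
  - intros f g [p Hp] [q Hq].
    rewrite (realize_spec _ _ p Hp), (realize_spec _ _ q Hq).
    apply (realize_spec _ _ (TMul p q)); intros sg.
    unfold pmul; simpl; rewrite Hp, Hq; reflexivity.
Qed.

End IdentitiesToVariety.

Definition Sigma_identities : list (term nat * term nat) :=
  let x := Var 0 in let y := Var 1 in let z := Var 2 in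
  [ (TMul (TMul x x) y, TMul x y);
    (TMul x (TMul y y), TMul x y);
    (TMul (TMul x y) z, TMul (TMul x z) y);
    (TMul x x, TAdd (TMul x x) x);
    (TMul x y, TAdd (TMul x y) (TMul (TMul x y) z));
    (TAdd x (TMul y z), TAdd (TAdd x (TMul y z)) (TMul y x)) ].

Lemma S453_Sigma_identities p q : In (p, q) Sigma_identities -> holds S453 p q.
Proof.
  simpl; intros Hin r.
  repeat destruct Hin as [Hin|Hin]; try injection Hin as <- <-; try contradiction;
    simpl; destruct (r 0), (r 1), (r 2); reflexivity.
Qed.

Lemma satisfies_Sigma_of_identities (A : aisemiring) :
  (forall p q, In (p, q) Sigma_identities -> holds A p q) -> satisfies_Sigma A.
Proof.
  intros HA.
  pose (env (x y z : A) (n : nat) := match n with 0 => x | 1 => y | _ => z end).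
  repeat split; intros;
    [ apply (HA _ _ ltac:(left; reflexivity) (env x y y))
    | apply (HA _ _ ltac:(do 1 right; left; reflexivity) (env x y y))
    | apply (HA _ _ ltac:(do 2 right; left; reflexivity) (env x y z))
    | apply (HA _ _ ltac:(do 3 right; left; reflexivity) (env x x x))
    | apply (HA _ _ ltac:(do 4 right; left; reflexivity) (env x y z))
    | apply (HA _ _ ltac:(do 5 right; left; reflexivity) (env x y z)) ].
Qed.

Theorem proposition4p2 :
  forall A : aisemiring,
    in_variety_generated_by S453 A <-> satisfies_Sigma A.
Proof.
  intros A; split.
  - intros HV. apply satisfies_Sigma_of_identities; intros p q Hin.
    apply (identities_of_variety S453 A HV), S453_Sigma_identities, Hin.
  - intros HA. apply variety_of_identities; intros p q.
    apply (identities_of_S453 A HA).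
Qed.
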